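(* Let $D$ be a reduced knot diagram with $n$ vertices and let $2\le k\le\infty$. Fix a version of the $k$-color region select game on $D$ and a checkerboard shading of $D$ whose unshaded regions admit an alternating signing; fix such a signing. Then the following hold. (1) For any shaded region $r$ and any unshaded region $r'$, every color configuration has a unique solving pattern in which $r$ and $r'$ are not pushed. (2) If $k$ is odd, then for any two unshaded regions of opposite signs, every color configuration has a unique solving pattern in which these two regions are not pushed. (3) Let $k<\infty$, let $S$ be a set of $i$ regions, and let $q$ be the number of color configurations having a solving pattern that does not push any region of $S$. - If $S$ contains at least one shaded and at least one unshaded region, then $q=k^{n+2-i}$. - If $i\ge1$ and $S$ consists only of shaded regions, or only of unshaded regions all of the same sign, then $q=k^{n+1-i}$. - If $S$ consists only of unshaded regions, not all of the same sign, then $q=k^{n+2-i}$ when $k$ is odd and $q=k^{n+2-i}/2$ when $k$ is even.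
   Context: Diagrams: a link (knot) diagram $D$ is the underlying graph of a regular projection of a link (knot) into $S^2$. Its vertices are the crossings, each of valence 4, and over/under information is ignored. Components without crossings are closed loops, each regarded as one edge with no vertices. Regions of $D$ are the connected components of $S^2\setminus D$. A vertex or edge is incident to a region if it lies in the boundary of that region. Two regions are adjacent if they are incident to a common edge. A vertex $v$ is reducible if some circle in $S^2$ meets $D$ transversely only at $v$, and irreducible otherwise. An irreducible vertex is incident to four distinct regions. A reducible vertex $v$ is incident to exactly three regions $r_0,r_1,r_2$, where $r_0$ touches $v$ from two sides and $r_1,r_2$ touch it from one side. A knot diagram with $n$ vertices has $n+2$ regions. A knot diagram is reduced if all its vertices are irreducible. Ring: for an integer $k\ge2$ let $\mathbb{Z}_k=\mathbb{Z}/k\mathbb{Z}$, and for $k=\infty$ let $\mathbb{Z}_\infty=\mathbb{Z}$. Game versions: a version of the $k$-color region select game on $D$ is a choice of an increment number $a(v,r)\in\mathbb{Z}_k$ for every incident vertex–region pair, subject to the following rules. - If $k<\infty$ and $v$ is irreducible, then $a(v,r)=a_v$ is the same for all regions $r$ incident to $v$, and $a_v$ is not a zero divisor of $\mathbb{Z}_k$. - If $k<\infty$ and $v$ is reducible, then $a(v,r_0)$ is arbitrary, while $a(v,r_1)$ and $a(v,r_2)$ are not zero divisors. - If $k=\infty$, then $a(v,r)=1$, except that $a(v,r_0)\in\mathbb{Z}$ is arbitrary when $v$ is reducible. - The original game is the version in which all increment numbers equal $1$. Game matrix: enumerate the vertices as $v_1,\dots,v_n$ and the regions as $r_1,\dots,r_m$.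 The game matrix is the $n\times m$ matrix $M$ over $\mathbb{Z}_k$ with $M_{ij}=a(v_i,r_j)$ if $v_i$ is incident to $r_j$, and $M_{ij}=0$ otherwise. Patterns and configurations: a push pattern is a vector $\mathbf p\in\mathbb{Z}_k^m$, and $\mathbf p(r_j)=p_j$ is the number of times $r_j$ is pushed. A region $r$ is not pushed in $\mathbf p$ if $\mathbf p(r)=0$. A color configuration is a vector $\mathbf c\in\mathbb{Z}_k^n$. Applying $\mathbf p$ to $\mathbf c$ yields $\mathbf c+M\mathbf p$. The configuration $\mathbf c$ is solvable if some $\mathbf p$ satisfies $M\mathbf p=-\mathbf c$; such a $\mathbf p$ is a solving pattern for $\mathbf c$. $D$ is always solvable in the version if every $\mathbf c\in\mathbb{Z}_k^n$ is solvable. A null pattern is an element of $Ker_k(M)=\{\mathbf p\in\mathbb{Z}_k^m: M\mathbf p=0\}$. Checkerboard shading: a checkerboard shading of $D$ is a shading of some of its regions such that, of any two adjacent regions, exactly one is shaded. Alternating signing: an alternating signing of the unshaded regions is an assignment of a sign $+$ or $-$ to each unshaded region such that every vertex is incident to two unshaded regions carrying opposite signs. *)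

From HB Require Import structures.
From mathcomp Require Import all_boot all_order fingroup perm all_algebra.
Set Implicit Arguments. Unset Strict Implicit. Unset Printing Implicit Defensive.
Import GRing.Theory.
Local Open Scope ring_scope.

(* The ring Z_k, 2 <= k <= oo: [Some k] is Z/kZ, [None] is Z (k = oo). *)
Definition Zk (k : option nat) : comUnitRingType :=
  match k with Some m => 'Z_m | None => int end.

Definition valid_k (k : option nat) : bool :=
  if k is Some m then (1 < m)%N else true.

Definition not_zero_divisor (R : comUnitRingType) (x : R) : Prop :=
  forall y : R, x * y = 0 -> y = 0.

Section Diagram.
Variable T : finType.        (* darts = half-edges at crossings *)
Variables s al : {perm T}.   (* s : rotation around a vertex; al : edge involution *)

(* face-tracing permutation: the region of dart d is the corner (sector)
   between d and s d; face_perm d is the next corner of the same region *)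
Definition face_perm : T -> T := fun d => (s^-1)%g (al d).
(* straight-ahead traversal of the curve through the crossings *)
Definition straight : T -> T := fun d => s (s (al d)).

(* (T, s, al) is a connected 4-regular map of genus 0 (a diagram in S^2)
   whose underlying curve has exactly one component (a knot). *)
Definition knot_map : Prop :=
  [/\ (forall d, al d != d /\ al (al d) = d),
      (forall d, fingraph.order s d = 4%N),
      (forall d e, connect (fun x y => (y == s x) || (y == al x)) d e),
      (fcard s T + fcard face_perm T = fcard al T + 2)%N
    & fcard straight T = 2%N].

Definition labeling (X : finType) (f : T -> T) (lab : T -> X) : Prop :=
  (forall d e, lab d = lab e <-> fconnect f d e) /\ (forall x, exists d, lab d = x).

Variables (V F : finType) (vtx : T -> V) (reg : T -> F).

Definition incident (v : V) (r : F) : bool :=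
  [exists d, (vtx d == v) && (reg d == r)].

Definition corners (v : V) (r : F) : nat :=
  #|[set d | (vtx d == v) && (reg d == r)]|.

Definition irreducible_vertex (v : V) : bool :=
  #|[set reg d | d in [pred d | vtx d == v]]| == 4%N.

Definition reduced : Prop := forall v, irreducible_vertex v.

Definition adjacent (r r' : F) : Prop :=
  exists d, (reg d = r /\ reg ((s^-1)%g d) = r') \/ (reg d = r' /\ reg ((s^-1)%g d) = r).

Definition checkerboard (shaded : pred F) : Prop :=
  forall r r', adjacent r r' -> shaded r != shaded r'.

Definition alternating_signing (shaded : pred F) (sgn : F -> bool) : Prop :=
  forall v, exists r1 r2, [/\ incident v r1, incident v r2, ~~ shaded r1, ~~ shaded r2
                            & sgn r1 != sgn r2].

Definition is_version (k : option nat) (a : V -> F -> Zk k) : Prop :=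
  match k with
  | Some _ =>
      forall v, if irreducible_vertex v then
                  exists av, not_zero_divisor av /\ forall r, incident v r -> a v r = av
                else forall r, incident v r -> corners v r = 1%N -> not_zero_divisor (a v r)
  | None =>
      forall v r, incident v r -> ~~ irreducible_vertex v && (corners v r >= 2)%N \/ a v r = 1
  end.

Definition game_apply (R : comUnitRingType) (a : V -> F -> R) (p : {ffun F -> R}) (v : V) : R :=
  \sum_(r | incident v r) a v r * p r.

Definition solving (R : comUnitRingType) (a : V -> F -> R) (c : {ffun V -> R}) (p : {ffun F -> R}) : Prop :=
  forall v, game_apply a p v = - c v.

Definition same_sign (sgn : F -> bool) (S : {set F}) : bool :=
  [forall r in S, [forall r' in S, sgn r == sgn r']].

Definition count_statement (m : nat) (shaded : pred F) (sgn : F -> bool)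
    (a : V -> F -> 'Z_m) : Prop :=
  forall S : {set F},
    let i := #|S| in
    let n := #|V| in
    let q := #|[set c : {ffun V -> 'Z_m} |
                 [exists p : {ffun F -> 'Z_m},
                    [forall r in S, p r == 0] &&
                    [forall v, game_apply a p v == - c v]]]| in
    [/\ [exists r in S, shaded r] && [exists r in S, ~~ shaded r] -> q = (m ^ (n + 2 - i))%N,
        (0 < i)%N && ((S \subset shaded) || ((S \subset [pred r | ~~ shaded r]) && same_sign sgn S))
          -> q = (m ^ (n + 1 - i))%N
      & (S \subset [pred r | ~~ shaded r]) && ~~ same_sign sgn S ->
          q = (if odd m then m ^ (n + 2 - i) else m ^ (n + 2 - i) %/ 2)%N].

Definition part3 (k : option nat) (shaded : pred F) (sgn : F -> bool) :
    (V -> F -> Zk k) -> Prop :=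
  match k as k0 return (V -> F -> Zk k0) -> Prop with
  | Some m => fun a => count_statement shaded sgn a
  | None => fun _ => True
  end.

End Diagram.

From Pilot Require Import Defs.
From HB Require Import structures.
From mathcomp Require Import all_boot all_order fingroup perm all_algebra.
From mathcomp Require Import zify ring.
Set Implicit Arguments. Unset Strict Implicit. Unset Printing Implicit Defensive.
Import GRing.Theory.

(* A null pattern (one whose application changes no colour) has, at every
   crossing, four corner values summing to zero, the increment there being a
   single non-zero-divisor.  The shading pattern (1 on shaded, -1 on unshaded
   regions) and the signing pattern (0 on shaded regions, the sign on unshaded
   ones) are null, and they span all null patterns: the sum of the values on
   the two sides of an edge changes sign when the knot passes straight through
   a crossing, so its product with the same sum for the signing pattern is
   constant along the single component of the knot; removing that multiple of
   the signing pattern leaves a pattern alternating in sign across every edge,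
   i.e. a multiple of the shading pattern.  Which members of this rank-2 kernel
   vanish on a set S of regions is read off from the shading and the signs in
   S, and counting fibres gives (3), as well as (1) and (2) for finite k, where
   a trivial kernel forces surjectivity.  For k = oo the integer matrix of the
   game with the columns of a shaded and an unshaded region deleted is square
   and injective modulo every prime, hence unimodular. *)

Lemma card_labeling (T X : finType) (f : T -> T) (lab : T -> X) :
  injective f -> labeling f lab -> #|X| = fcard f T.
Proof.
move=> injf [lab_eq lab_onto].
have symf := fconnect_sym injf.
have root_lab_inj : {in predI (froots f) T &, injective lab}.
  move=> x y /andP[/eqP rx _] /andP[/eqP ry _] /lab_eq /(fingraph.rootP symf).
  by rewrite rx ry.
rewrite /n_comp_mem -(card_in_imset root_lab_inj) -cardsT.
congr #|(_ : {set _})|; apply/esym/setP => z; rewrite inE; have [d <-] := lab_onto z.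
apply/imsetP; exists (froot f d); first by rewrite inE /= roots_root.
by apply/lab_eq; apply: connect_root.
Qed.

Lemma fcard_mul_order (T : finType) (f : T -> T) n :
  injective f -> (forall x, fingraph.order f x = n) -> (fcard f T * n = #|T|)%N.
Proof.
move=> injf ordf; rewrite -(eq_n_comp_r (a := T) (a' := predT)) //.
by apply: fcard_order_set => //; apply/subsetP => x _; rewrite inE /= ordf.
Qed.

Lemma order_involution (T : finType) (f : T -> T) x :
  involutive f -> f x != x -> fingraph.order f x = 2.
Proof.
move=> fK fx_neq; have orb_uniq : uniq [:: x; f x] by rewrite /= inE eq_sym fx_neq.
rewrite /fingraph.order -[2]/(size [:: x; f x]) -(card_uniqP orb_uniq).
apply: eq_card => y; apply/idP/idP => [/iter_findex <-|]; last first.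
  by rewrite !inE => /orP[] /eqP->; [exact: connect0 | exact: fconnect1].
elim: (findex _ _ _) => [|i IH]; first by rewrite !inE eqxx.
by move: IH; rewrite !inE iterS => /orP[] /eqP->; rewrite ?fK eqxx ?orbT.
Qed.

Lemma card_imset_mul_kernel (X Y : finType) (R : finZmodType)
    (f : {ffun X -> R} -> {ffun Y -> R}) (D : {set {ffun X -> R}}) :
  (forall p q, f (p - q)%R = (f p - f q)%R) ->
  (forall p q, p \in D -> q \in D -> (p - q)%R \in D) ->
  (#|f @: D| * #|[set p in D | f p == 0%R]| = #|D|)%N.
Proof.
move=> fB DB; rewrite -[#|D|]sum1_card (partition_big f (mem (f @: D))) /=; last first.
  by move=> p Dp; apply: imset_f.
rewrite -sum_nat_const; apply: eq_bigr => _ /imsetP[p0 Dp0 ->].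
rewrite sum1_card -(card_imset [set p in D | f p == 0%R] (@subrI _ p0)).
apply: eq_card => p; apply/imsetP/idP => [[k]|].
  by rewrite inE => /andP[Dk /eqP fk] ->; rewrite unfold_in /= DB // fB fk subr0 eqxx.
rewrite unfold_in /= => /andP[Dp /eqP fp]; exists (p0 - p)%R; last by rewrite opprB subrKC.
by rewrite inE DB // fB fp subrr eqxx.
Qed.

Lemma int_unit_of_Fp_neq0 (z : int) :
  (forall p, prime p -> (z%:~R : 'F_p) != 0)%R -> z \is a GRing.unit.
Proof.
have Fp_eq0 p : prime p -> (p %| `|z|)%N -> (z%:~R : 'F_p)%R = 0%R.
  move=> p_pr /eqP p_z; rewrite -[z]mulz_sign_abs rmorphM /= intr_sign.
  by rewrite -[((`|z|%N)%:~R)%R]/((`|z|%N)%:R)%R -(Fp_nat_mod p_pr) p_z mulr0.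
move=> z_Fp; suff z1 : `|z|%N = 1%N by rewrite -[z]mulz_sign_abs z1 mulr1 unitrX ?unitrN1.
case def_z: `|z|%N => [|[|k]] //.
  by have := z_Fp 2 isT; rewrite Fp_eq0 ?eqxx // def_z.
by have := z_Fp _ (pdiv_prime (isT : 1 < k.+2)%N); rewrite Fp_eq0 ?pdiv_prime ?def_z ?pdiv_dvd.
Qed.

Lemma Zp_double_eq0 m (c : 'Z_m) : (1 < m)%N ->
  (c + c == 0)%R = (val c == 0%N) || (val c + val c == m)%N.
Proof.
move=> m_gt1; have m_cast := Zp_cast m_gt1.
have c_lt : ((c : nat) < m)%N by rewrite -[m in (_ < m)%N]m_cast; exact: ltn_ord.
have cc_val : val (c + c)%R = ((val c + val c) %% m)%N.
  by rewrite /= [X in (_ %% X)%N]m_cast.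
rewrite -val_eqE cc_val /=; move: (c : nat) c_lt => n n_lt.
case: (leqP m (n + n)) => [cc_ge|cc_lt].
  rewrite -(subnK cc_ge) modnDr modn_small; last by lia.
  by apply/eqP/orP => [|[] /eqP]; lia.
by rewrite modn_small //; apply/eqP/orP => [|[] /eqP]; lia.
Qed.

Lemma Zp_double_eq0_odd m (c : 'Z_m) : (1 < m)%N -> odd m -> (c + c = 0)%R -> c = 0%R.
Proof.
move=> m_gt1 m_odd /eqP; rewrite Zp_double_eq0 // => /orP[/eqP c0|/eqP cc_m].
  exact: val_inj.
by rewrite -cc_m addnn odd_double in m_odd.
Qed.

Lemma card_Zp_double_eq0 m : (1 < m)%N ->
  #|[set c : 'Z_m | (c + c == 0)%R]| = (if odd m then 1 else 2)%N.
Proof.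
move=> m_gt1; have m_cast := Zp_cast m_gt1.
case: (boolP (odd m)) => m_odd.
  rewrite -(cards1 (0 : 'Z_m)%R); apply: eq_card => c; rewrite !inE.
  by apply/eqP/eqP => [/Zp_double_eq0_odd->|->]; rewrite ?addr0.
have half_lt : (m./2 < (Zp_trunc m).+2)%N by rewrite m_cast; lia.
have half_neq0 : (0 : 'Z_m)%R != Ordinal half_lt by rewrite -val_eqE /=; lia.
rewrite -[2%N]/(true.+1) -half_neq0 -cards2; apply: eq_card => c.
rewrite !inE Zp_double_eq0 // -!val_eqE /=; congr (_ || _).
have := odd_double_half m; rewrite (negbTE m_odd) add0n => m_half.
by apply/eqP/eqP; lia.
Qed.

Section KnotMap.
Variables (T : finType) (s al : {perm T}).
Hypothesis knot : knot_map s al.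

Lemma alK : involutive al. Proof. by case: knot => H _ _ _ _ d; case: (H d). Qed.
Lemma al_fixfree d : al d != d. Proof. by case: knot => H _ _ _ _; case: (H d). Qed.
Lemma order_s d : fingraph.order s d = 4. Proof. by case: knot. Qed.

Lemma s4K d : s (s (s (s d))) = d.
Proof. by have := iter_order (@perm_inj _ s) d; rewrite order_s. Qed.

Lemma permV_s d : (s^-1)%g d = s (s (s d)).
Proof. by rewrite -{1}(s4K d) !permK. Qed.

Lemma iter_s_inj d i j : i < 4 -> j < 4 -> iter i s d = iter j s d -> i = j.
Proof.
move=> lt_i4 lt_j4 eq_ij; have := findex_iter (f := s) (x := d) (i := i).
by rewrite order_s eq_ij findex_iter ?order_s => // ->.
Qed.

Lemma s2_fixfree d : s (s d) != d.
Proof. by apply/eqP => /(@iter_s_inj d 2 0 erefl erefl). Qed.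

Local Notation straight := (straight s al).

Lemma straight_inj : injective straight.
Proof. by move=> x y /perm_inj /perm_inj /perm_inj. Qed.

Lemma darts_nonempty : exists d : T, true.
Proof.
case: (pickP (@predT T)) => [d _|T0]; first by exists d.
by case: knot => _ _ _ _; rewrite /n_comp_mem eq_card0 // => x; have := T0 x.
Qed.

(* [s^2] reverses the straight-ahead traversal: if every dart lay on the
   straight orbit of its reverse, [s^2] would act on that orbit as a
   reflection, whose midpoint is a dart [x] with [s^2 x = x] or with
   [s^2 x = straight x], i.e. [al x = x]. *)
Lemma straight_separates_reverse : exists x, ~~ fconnect straight x (al x).
Proof.
have [/existsP //|/existsPn all_conn] := boolP [exists x, ~~ fconnect straight x (al x)].
have {}all_conn x : fconnect straight x (al x) by have := all_conn x; rewrite negbK.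
have [d _] := darts_nonempty.
have s2_straight y : straight (s (s (straight y))) = s (s y).
  by rewrite /Defs.straight s4K alK.
have s2E y : s (s y) = straight (al y) by rewrite /Defs.straight alK.
have /iter_findex : fconnect straight d (s (s d)).
  by apply: connect_trans (all_conn d) _; rewrite s2E; apply: fconnect1.
set j := findex _ _ _ => iter_j.
have reflect_orbit i : i <= j -> s (s (iter i straight d)) = iter (j - i) straight d.
  elim: i => [|i IH] le_ij; first by rewrite subn0 iter_j.
  have := IH (ltnW le_ij); have -> : j - i = (j - i.+1).+1 by lia.
  by rewrite iterS -(s2_straight (iter i straight d)) => /straight_inj <-.
have := odd_double_half j; set i := j./2; case: (odd j) => /= def_j.
  have := reflect_orbit i (ltac:(lia)).
  have -> : j - i = i.+1 by lia.
  by rewrite iterS s2E => /straight_inj /eqP; rewrite (negbTE (al_fixfree _)).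
have := reflect_orbit i (ltac:(lia)).
have -> : j - i = i by lia.
by move/eqP; rewrite (negbTE (s2_fixfree _)).
Qed.

(* There are exactly two straight orbits, and the reversal [al] of some dart
   leaves its orbit, so the two orbits are exchanged by [al]. *)
Lemma straight_al_invariant_const (Y : Type) (g : T -> Y) :
  (forall x, g (straight x) = g x) -> (forall x, g (al x) = g x) ->
  forall x y, g x = g y.
Proof.
move=> g_straight g_al.
have [x0 sep_x0] := straight_separates_reverse.
suff g_x0 y : g y = g x0 by move=> x y; rewrite !g_x0.
have symf := fconnect_sym straight_inj.
pose rt := froot straight.
have g_rt z : g (rt z) = g z.
  have /iter_findex <- : fconnect straight z (rt z) by apply: connect_root.
  by elim: (findex _ _ _) => [|n IH] //; rewrite iterS g_straight.
have rt_x0 : rt x0 != rt (al x0).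
  by apply: contra sep_x0 => /eqP /(fingraph.rootP symf).
suff: (rt y == rt x0) || (rt y == rt (al x0)).
  by case/orP => /eqP rt_y; rewrite -g_rt rt_y g_rt ?g_al.
apply/negPn/negP => /norP[rt_y0 rt_y1].
have rts_uniq : uniq [:: rt x0; rt (al x0); rt y].
  by rewrite /= !inE negb_or rt_x0 !(eq_sym _ (rt y)) rt_y0 rt_y1.
have : (3 <= fcard straight T)%N.
  rewrite -[3%N]/(size [:: rt x0; rt (al x0); rt y]) -(card_uniqP rts_uniq).
  apply: subset_leq_card; apply/subsetP => z.
  by rewrite !inE => /or3P[] /eqP->; rewrite /= roots_root.
by case: knot => _ _ _ _ ->.
Qed.

Lemma connected_invariant_const (Y : Type) (g : T -> Y) :
  (forall x, g (s x) = g x) -> (forall x, g (al x) = g x) -> forall x y, g x = g y.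
Proof.
move=> g_s g_al x y; case: knot => _ _ conn _ _.
have /connectP[p p_path ->] := conn x y.
elim: p x p_path => [|z p IH] x //= /andP[/orP[] /eqP -> p_path].
  by rewrite -IH // g_s.
by rewrite -IH // g_al.
Qed.

Lemma fcard_faces : fcard (face_perm s al) T = (fcard s T + 2)%N.
Proof.
have := fcard_mul_order (@perm_inj _ s) order_s.
have := fcard_mul_order (@perm_inj _ al) (fun d => order_involution alK (al_fixfree d)).
by case: knot => _ _ _ euler _; lia.
Qed.

End KnotMap.

Section Diagram.
Variables (T : finType) (s al : {perm T}) (V F : finType).
Variables (vtx : T -> V) (reg : T -> F) (shaded : pred F).
Hypothesis knot : knot_map s al.
Hypothesis vtx_lab : labeling s vtx.
Hypothesis reg_lab : labeling (face_perm s al) reg.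
Hypothesis red : reduced vtx reg.
Hypothesis chk : checkerboard s reg shaded.

Local Notation incident := (incident vtx reg).

Lemma face_perm_inj : injective (face_perm s al).
Proof. exact: inj_comp (@perm_inj _ _) (@perm_inj _ _). Qed.

Lemma reg_face d : reg (face_perm s al d) = reg d.
Proof.
case: reg_lab => reg_eq _; apply/reg_eq.
by rewrite fconnect_sym ?fconnect1 //; exact: face_perm_inj.
Qed.

Lemma reg_al d : reg (al d) = reg ((s^-1)%g d).
Proof. by rewrite -(reg_face (al d)) /face_perm (alK knot). Qed.

Lemma shaded_reg_s d : shaded (reg (s d)) = ~~ shaded (reg d).
Proof.
have: adjacent s reg (reg (s d)) (reg d) by exists (s d); left; rewrite permK.
by move/chk; case: (shaded _); case: (shaded _).
Qed.

Lemma card_regions : #|F| = (#|V| + 2)%N.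
Proof.
rewrite (card_labeling face_perm_inj reg_lab) (card_labeling (@perm_inj _ s) vtx_lab).
exact: fcard_faces.
Qed.

Lemma card_notin_regions (S : {set F}) r : r \notin S -> (#|S| <= #|V| + 1)%N.
Proof.
move=> r_S; suff : (#|S| < #|F|)%N by rewrite card_regions; lia.
rewrite -cardsT; apply: proper_card; rewrite properT.
by apply: contraNneq r_S => ->; rewrite inE.
Qed.

Lemma exists_shaded_unshaded : exists rs ru, shaded rs /\ ~~ shaded ru.
Proof.
have [d _] := darts_nonempty knot; have := shaded_reg_s d.
case shd: (shaded (reg d)) => /= sh_s; last by exists (reg (s d)), (reg d); rewrite shd sh_s.
by exists (reg d), (reg (s d)); rewrite shd sh_s.
Qed.

Definition corner_regions d := [:: reg d; reg (s d); reg (s (s d)); reg (s (s (s d)))].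

Lemma vtx_eqE d e : (vtx e == vtx d) = (e \in [:: d; s d; s (s d); s (s (s d))]).
Proof.
case: vtx_lab => vtx_eq _.
have -> : [:: d; s d; s (s d); s (s (s d))] = orbit s d by rewrite /orbit (order_s knot).
rewrite -fconnect_orbit fconnect_sym; last exact: perm_inj.
by apply/eqP/idP => /vtx_eq.
Qed.

Lemma incidentE d r : incident (vtx d) r = (r \in corner_regions d).
Proof.
apply/existsP/idP => [[e /andP[/eqP vtx_e /eqP <-]]|].
  have: e \in [:: d; s d; s (s d); s (s (s d))] by rewrite -vtx_eqE vtx_e.
  by rewrite !inE => /or4P[] /eqP->; rewrite eqxx ?orbT.
rewrite !inE => /or4P[] /eqP->;
  [exists d | exists (s d) | exists (s (s d)) | exists (s (s (s d)))];
  by rewrite vtx_eqE !inE !eqxx ?orbT.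
Qed.

Lemma corner_regions_uniq d : uniq (corner_regions d).
Proof.
apply/card_uniqP; rewrite [size _]/= -(eqP (red (vtx d))).
apply: eq_card => r; rewrite -incidentE.
apply/existsP/imsetP => [[e /andP[vtx_e /eqP <-]]|[e vtx_e ->]]; first by exists e.
by exists e; rewrite eqxx andbT; exact: vtx_e.
Qed.

Definition corner_sum (R : zmodType) (p : F -> R) d :=
  (p (reg d) + p (reg (s d)) + p (reg (s (s d))) + p (reg (s (s (s d)))))%R.

Lemma game_apply_vertex (R : comUnitRingType) (a : V -> F -> R) (av : R) d
    (p : {ffun F -> R}) :
  (forall r, incident (vtx d) r -> a (vtx d) r = av) ->
  game_apply vtx reg a p (vtx d) = (av * corner_sum p d)%R.
Proof.
move=> a_const; rewrite /game_apply (eq_bigl (mem (corner_regions d))); last first.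
  by move=> r; rewrite incidentE.
rewrite -(big_uniq _ (corner_regions_uniq d)) (eq_big_seq (fun r => av * p r)%R).
  by rewrite !big_cons big_nil /= addr0 /corner_sum !mulrDr !addrA.
by move=> r r_corner; rewrite a_const // incidentE.
Qed.

Lemma shaded_reg_permV d : shaded (reg ((s^-1)%g d)) = ~~ shaded (reg d).
Proof. by rewrite -{2}[d](permKV s) shaded_reg_s negbK. Qed.

Variable sgn : F -> bool.
Hypothesis signing : alternating_signing vtx reg shaded sgn.

Lemma unshaded_opposite_sign d :
  ~~ shaded (reg d) -> sgn (reg d) != sgn (reg (s (s d))).
Proof.
move=> d_unsh; have [r1 [r2 [in1 in2 uns1 uns2]]] := signing (vtx d).
have unshaded_corner r : incident (vtx d) r -> ~~ shaded r ->
    (r == reg d) || (r == reg (s (s d))).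
  rewrite incidentE !inE => /or4P[] /eqP-> //; rewrite ?eqxx ?orbT //.
    by rewrite shaded_reg_s d_unsh.
  by rewrite !shaded_reg_s negbK d_unsh.
move: (unshaded_corner r1 in1 uns1) (unshaded_corner r2 in2 uns2).
by do 2![case/orP => /eqP->]; rewrite ?eqxx // eq_sym.
Qed.

Section Patterns.
Variable R : comUnitRingType.
Local Open Scope ring_scope.

Definition shade_pattern (r : F) : R := if shaded r then 1 else -1.
Definition sign_pattern (r : F) : R := if shaded r then 0 else if sgn r then 1 else -1.

Definition kernel_pattern (x : R * R) : {ffun F -> R} :=
  [ffun r => x.1 * sign_pattern r + x.2 * shade_pattern r].

Lemma corner_sum_s (p : F -> R) d : corner_sum p (s d) = corner_sum p d.
Proof. by rewrite /corner_sum (s4K knot); ring. Qed.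

Lemma corner_sum_shade_pattern d : corner_sum shade_pattern d = 0.
Proof.
rewrite /corner_sum /shade_pattern !shaded_reg_s negbK.
by case: (shaded (reg d)) => /=; ring.
Qed.

Lemma corner_sum_sign_pattern d : corner_sum sign_pattern d = 0.
Proof.
wlog d_unsh : d / ~~ shaded (reg d).
  move=> unsh_case; case: (boolP (shaded (reg d))) => [d_sh|]; last exact: unsh_case.
  by rewrite -corner_sum_s unsh_case // shaded_reg_s d_sh.
have := unshaded_opposite_sign d_unsh.
rewrite /corner_sum /sign_pattern !shaded_reg_s negbK (negbTE d_unsh) /=.
by case: (sgn _); case: (sgn _) => //= _; ring.
Qed.

Definition edge_sum (p : F -> R) d := p (reg d) + p (reg ((s^-1)%g d)).

Lemma edge_sum_al (p : F -> R) d : edge_sum p (al d) = edge_sum p d.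
Proof.
by rewrite /edge_sum reg_al -/(face_perm s al d) reg_face addrC.
Qed.

Lemma edge_sum_straight (p : F -> R) d :
  corner_sum p (al d) = 0 -> edge_sum p (straight s al d) = - edge_sum p d.
Proof.
rewrite -(edge_sum_al p d) /straight /edge_sum !(permV_s knot) (s4K knot).
move: (al d) => e; rewrite /corner_sum => corner0.
by apply/eqP; rewrite -addr_eq0 -corner0; apply/eqP; ring.
Qed.

Lemma edge_sum_sign_pattern_sqr d : edge_sum sign_pattern d ^+ 2 = 1.
Proof.
rewrite /edge_sum /sign_pattern shaded_reg_permV.
by case: (shaded _) => /=; case: (sgn _); rewrite ?add0r ?addr0 ?sqrrN expr1n.
Qed.

Lemma shade_pattern_s d : shade_pattern (reg (s d)) = - shade_pattern (reg d).
Proof. by rewrite /shade_pattern shaded_reg_s; case: (shaded _); rewrite ?opprK. Qed.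

Lemma shade_pattern_permV d :
  shade_pattern (reg ((s^-1)%g d)) = - shade_pattern (reg d).
Proof. by rewrite /shade_pattern shaded_reg_permV; case: (shaded _); rewrite ?opprK. Qed.

Lemma shade_pattern_sqr r : shade_pattern r ^+ 2 = 1.
Proof. by rewrite /shade_pattern; case: (shaded _); rewrite ?sqrrN expr1n. Qed.

Variable a : V -> F -> R.
Hypothesis a_const : forall v, exists av,
  not_zero_divisor av /\ forall r, incident v r -> a v r = av.

Definition null_pattern (p : {ffun F -> R}) := forall v, game_apply vtx reg a p v = 0.

Lemma null_patternP p : null_pattern p <-> forall d, corner_sum p d = 0.
Proof.
split=> [p0 d | corner0 v].
  have [av [av_reg a_av]] := a_const (vtx d).
  by apply: av_reg; rewrite -(game_apply_vertex _ a_av) p0.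
case: vtx_lab => _ /(_ v) [d <-]; have [av [_ a_av]] := a_const (vtx d).
by rewrite (game_apply_vertex _ a_av) corner0 mulr0.
Qed.

Lemma null_pattern_kernel p : null_pattern p -> exists x, p = kernel_pattern x.
Proof.
move/null_patternP => corner0; have [d0 _] := darts_nonempty knot.
pose h d := edge_sum p d * edge_sum sign_pattern d.
have h_const : forall x y, h x = h y.
  apply: (straight_al_invariant_const knot) => x; rewrite /h; last by rewrite !edge_sum_al.
  by rewrite !edge_sum_straight ?corner0 ?corner_sum_sign_pattern // mulrNN.
pose c := h d0; pose q r := p r - c * sign_pattern r.
have edge_q d : edge_sum q d = 0.
  have : edge_sum p d = c * edge_sum sign_pattern d.
    by rewrite /c (h_const d0 d) /h -mulrA -expr2 edge_sum_sign_pattern_sqr mulr1.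
  by rewrite /edge_sum /q => edge_p; rewrite addrACA -opprD -mulrDr edge_p subrr.
pose g d := shade_pattern (reg d) * q (reg d).
have g_const : forall x y, g x = g y.
  apply: (connected_invariant_const knot) => x; rewrite /g.
    have /eqP := edge_q (s x); rewrite /edge_sum permK addr_eq0 => /eqP->.
    by rewrite shade_pattern_s mulrNN.
  have /eqP := edge_q x; rewrite /edge_sum addrC addr_eq0 reg_al => /eqP->.
  by rewrite shade_pattern_permV mulrNN.
exists (c, g d0); apply/ffunP => r; rewrite ffunE /=; case: reg_lab => _ /(_ r) [d <-].
by rewrite (g_const d0 d) /g [_ * q _ * _]mulrAC -expr2 shade_pattern_sqr mul1r /q subrKC.
Qed.

Lemma kernel_pattern_null x : null_pattern (kernel_pattern x).
Proof.
apply/null_patternP => d.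
have -> : corner_sum (kernel_pattern x) d =
    x.1 * corner_sum sign_pattern d + x.2 * corner_sum shade_pattern d.
  by rewrite /corner_sum !ffunE; ring.
by rewrite corner_sum_sign_pattern corner_sum_shade_pattern !mulr0 addr0.
Qed.

Lemma kernel_pattern_shaded x r : shaded r -> kernel_pattern x r = x.2.
Proof. by rewrite ffunE /sign_pattern /shade_pattern => ->; rewrite mulr0 mulr1 add0r. Qed.

Lemma kernel_pattern_unshaded x r :
  ~~ shaded r -> kernel_pattern x r = (if sgn r then x.1 else - x.1) - x.2.
Proof.
rewrite ffunE /sign_pattern /shade_pattern => /negbTE->.
by case: (sgn r); rewrite ?mulr1 ?mulrN1.
Qed.

Lemma kernel_pattern_inj : injective kernel_pattern.
Proof.
have [rs [ru [rs_sh ru_unsh]]] := exists_shaded_unshaded.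
move=> [x1 x2] [y1 y2] eq_xy.
have eq2 : x2 = y2 by move/ffunP/(_ rs): eq_xy; rewrite !kernel_pattern_shaded.
move/ffunP/(_ ru): eq_xy; rewrite !kernel_pattern_unshaded //= eq2 => /addIr.
by case: (sgn ru) => [->|/oppr_inj->].
Qed.

Lemma kernel_pattern_eq0_mixed x r r' : shaded r -> ~~ shaded r' ->
  kernel_pattern x r = 0 -> kernel_pattern x r' = 0 -> x = (0, 0).
Proof.
case: x => x1 x2 r_sh r'_unsh; rewrite kernel_pattern_shaded //= => ->.
rewrite kernel_pattern_unshaded //= subr0.
by case: (sgn r') => [->|/eqP]; rewrite ?oppr_eq0 // => /eqP->.
Qed.

Lemma kernel_pattern_eq0_opposite x r r' : (forall y : R, y + y = 0 -> y = 0) ->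
  ~~ shaded r -> ~~ shaded r' -> sgn r != sgn r' ->
  kernel_pattern x r = 0 -> kernel_pattern x r' = 0 -> x = (0, 0).
Proof.
case: x => x1 x2 no2tor r_unsh r'_unsh; rewrite !kernel_pattern_unshaded //=.
wlog sgn_r : r r' r_unsh r'_unsh / sgn r.
  move=> sym_case sgn_rr'; case sgn_r: (sgn r) sgn_rr' => sgn_rr' p_r p_r'.
    by apply: (sym_case r r'); rewrite ?sgn_r.
  have sgn_r' : sgn r' by move: sgn_rr'; case: (sgn r').
  by apply: (sym_case r' r) => //; rewrite sgn_r // sgn_r'.
rewrite sgn_r; case: (sgn r') => // _ /eqP; rewrite subr_eq0 => /eqP <-.
by rewrite -opprD => /eqP; rewrite oppr_eq0 => /eqP /no2tor ->.
Qed.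

Lemma game_applyB (p q : {ffun F -> R}) v :
  game_apply vtx reg a (p - q) v = game_apply vtx reg a p v - game_apply vtx reg a q v.
Proof. by rewrite /game_apply -sumrB; apply: eq_bigr => r _; rewrite !ffunE mulrBr. Qed.

Lemma exists_unique_solving c r r' :
  (forall x, kernel_pattern x r = 0 -> kernel_pattern x r' = 0 -> x = (0, 0)) ->
  (exists p, [/\ solving vtx reg a c p, p r = 0 & p r' = 0]) ->
  exists! p, [/\ solving vtx reg a c p, p r = 0 & p r' = 0].
Proof.
move=> kernel_eq0 [p [p_sol p_r p_r']]; exists p; split=> // q [q_sol q_r q_r'].
have /null_pattern_kernel [x pq_eq] : null_pattern (p - q).
  by move=> v; rewrite game_applyB p_sol q_sol subrr.
have x0 : x = (0, 0) by apply: kernel_eq0; rewrite -pq_eq !ffunE ?p_r ?q_r ?p_r' ?q_r' subrr.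
apply/eqP; rewrite -subr_eq0 pq_eq x0; apply/eqP/ffunP => r''.
by rewrite !ffunE !mul0r addr0.
Qed.

End Patterns.

Section Counting.
Variables (R : finComUnitRingType) (a : V -> F -> R).
Hypothesis a_const : forall v, exists av,
  not_zero_divisor av /\ forall r, incident v r -> a v r = av.
Local Open Scope ring_scope.

Definition avoiding (S : {set F}) := [set p : {ffun F -> R} | [forall r in S, p r == 0]].

Definition solvable_avoiding (S : {set F}) :=
  [set c : {ffun V -> R} | [exists p : {ffun F -> R},
     [forall r in S, p r == 0] && [forall v, game_apply vtx reg a p v == - c v]]].

Definition kernel_vanishing (S : {set F}) :=
  [set x : R * R | [forall r in S, kernel_pattern x r == 0]].

Definition coloring_of (p : {ffun F -> R}) : {ffun V -> R} :=
  [ffun v => - game_apply vtx reg a p v].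

Lemma card_avoiding S : #|avoiding S| = (#|R| ^ (#|F| - #|S|))%N.
Proof.
have -> : (#|F| - #|S| = #|~: S|)%N by rewrite [#|~: S|]cardsCs setCK.
rewrite -(card_pffun_on 0 (~: S) predT); apply: eq_card => p.
rewrite inE; apply/forallP/pffun_onP => [p_S|[supp_p _] r].
  split=> [|r _ //]; apply/subsetP => r; rewrite !inE; apply: contra => r_S.
  by have := p_S r; rewrite r_S.
by apply/implyP => r_S; apply: contraT => /(subsetP supp_p); rewrite !inE r_S.
Qed.

Lemma solvable_avoidingE S : solvable_avoiding S = coloring_of @: avoiding S.
Proof.
apply/setP => c; rewrite inE; apply/existsP/imsetP => [[p /andP[p_S /forallP p_sol]]|].
  by exists p; rewrite ?inE //; apply/ffunP => v; rewrite ffunE (eqP (p_sol v)) opprK.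
move=> [p p_S ->]; exists p; rewrite inE in p_S; rewrite p_S.
by apply/forallP => v; rewrite ffunE opprK.
Qed.

Lemma kernel_avoidingE S :
  [set p in avoiding S | coloring_of p == 0] = @kernel_pattern R @: kernel_vanishing S.
Proof.
apply/setP => p; rewrite !inE; apply/andP/imsetP => [[p_S /eqP p_null]|[x x_S ->]].
  have [|x p_eq] := null_pattern_kernel a_const (p := p).
    by move=> v; move/ffunP/(_ v)/eqP: p_null; rewrite !ffunE oppr_eq0 => /eqP.
  by exists x; rewrite // inE -p_eq.
split; first by rewrite inE in x_S.
by apply/eqP/ffunP => v; rewrite !ffunE kernel_pattern_null ?oppr0.
Qed.

Lemma card_solvable_avoiding S :
  (#|solvable_avoiding S| * #|kernel_vanishing S| = #|R| ^ (#|V| + 2 - #|S|))%N.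
Proof.
rewrite solvable_avoidingE -(card_imset _ (@kernel_pattern_inj R)) -kernel_avoidingE.
rewrite card_imset_mul_kernel -?card_regions ?card_avoiding //.
  by move=> p q; apply/ffunP => v; rewrite /coloring_of !ffunE game_applyB opprD opprK.
move=> p q; rewrite !inE => /forallP p_S /forallP q_S; apply/forallP => r.
apply/implyP => r_S; rewrite !ffunE.
by move/implyP/(_ r_S)/eqP: (p_S r) => ->; move/implyP/(_ r_S)/eqP: (q_S r) => ->; rewrite subr0.
Qed.

Lemma exists_solving_avoiding c r r' : r != r' ->
  (forall x : R * R, kernel_pattern x r = 0 -> kernel_pattern x r' = 0 -> x = (0, 0)) ->
  exists p, [/\ solving vtx reg a c p, p r = 0 & p r' = 0].
Proof.
move=> neq_rr' kernel_eq0.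
have kerE : kernel_vanishing [set r; r'] = [set (0, 0)].
  apply/setP => x; rewrite !inE; apply/forallP/eqP => [x_van|-> r''].
    apply: kernel_eq0; apply/eqP; [move: (x_van r) | move: (x_van r')];
    by rewrite !inE eqxx ?orbT.
  by rewrite !ffunE !mul0r addr0 eqxx implybT.
have : c \in solvable_avoiding [set r; r'].
  suff -> : solvable_avoiding [set r; r'] = setT by rewrite inE.
  apply/eqP; rewrite eqEcard subsetT cardsT card_ffun.
  have := card_solvable_avoiding [set r; r'].
  by rewrite kerE cards1 muln1 cards2 neq_rr' /= addnK => ->.
rewrite inE => /existsP[p /andP[/forallP p_S /forallP p_sol]]; exists p; split.
- by move=> v; apply/eqP.
- by move: (p_S r); rewrite !inE eqxx => /eqP.
- by move: (p_S r'); rewrite !inE eqxx orbT => /eqP.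
Qed.

Lemma kernel_vanishing_mixed (S : {set F}) :
  [exists r in S, shaded r] && [exists r in S, ~~ shaded r] ->
  kernel_vanishing S = [set (0, 0)].
Proof.
case/andP=> /existsP[r /andP[r_S r_sh]] /existsP[r' /andP[r'_S r'_unsh]].
apply/setP => x; rewrite !inE; apply/forallP/eqP => [x_van|-> r''].
  by apply: (kernel_pattern_eq0_mixed r_sh r'_unsh); apply/eqP;
    [move: (x_van r); rewrite r_S | move: (x_van r'); rewrite r'_S].
by rewrite !ffunE !mul0r addr0 eqxx implybT.
Qed.

Lemma card_kernel_vanishing_shaded (S : {set F}) r0 : r0 \in S -> S \subset shaded ->
  #|kernel_vanishing S| = #|R|.
Proof.
move=> r0_S /subsetP S_sh; have inj_y0 : injective (fun y : R => (y, 0 : R)) by move=> y z [].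
rewrite -(card_imset _ inj_y0).
apply: eq_card => -[x1 x2]; rewrite inE; apply/forallP/imsetP => [x_van|[y _ [-> ->]] r].
  exists x1 => //; move: (x_van r0).
  by rewrite r0_S (kernel_pattern_shaded _ (S_sh _ r0_S)) /= => /eqP->.
by apply/implyP => r_S; rewrite (kernel_pattern_shaded _ (S_sh _ r_S)).
Qed.

Lemma card_kernel_vanishing_same_sign (S : {set F}) r0 : r0 \in S ->
  S \subset [pred r | ~~ shaded r] -> same_sign sgn S -> #|kernel_vanishing S| = #|R|.
Proof.
move=> r0_S /subsetP S_unsh /forallP S_sgn.
have sgn_S r : r \in S -> sgn r = sgn r0.
  by move=> r_S; move: (S_sgn r); rewrite r_S => /forallP/(_ r0); rewrite r0_S => /eqP.
have inj_y : injective (fun y : R => (y, if sgn r0 then y else - y)) by move=> y z [].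
rewrite -(card_imset _ inj_y); apply: eq_card => -[x1 x2]; rewrite inE.
apply/forallP/imsetP => [x_van|[y _ [-> ->]] r].
  exists x1 => //; move: (x_van r0).
  by rewrite r0_S (kernel_pattern_unshaded _ (S_unsh _ r0_S)) /= subr_eq0 => /eqP->.
by apply/implyP => r_S; rewrite (kernel_pattern_unshaded _ (S_unsh _ r_S)) sgn_S ?subrr.
Qed.

Lemma card_kernel_vanishing_opposite (S : {set F}) :
  S \subset [pred r | ~~ shaded r] -> ~~ same_sign sgn S ->
  #|kernel_vanishing S| = #|[set y : R | y + y == 0]|.
Proof.
move=> /subsetP S_unsh /forallPn[r1]; rewrite negb_imply => /andP[r1_S /forallPn[r2]].
rewrite negb_imply => /andP[r2_S sgn12].
have [rp [rn [rp_S rn_S sgn_rp /negbTE sgn_rn]]] :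
    exists rp rn, [/\ rp \in S, rn \in S, sgn rp & ~~ sgn rn].
  case sg1: (sgn r1) sgn12; case sg2: (sgn r2) => // _.
    by exists r1, r2; rewrite sg1 sg2.
  by exists r2, r1; rewrite sg1 sg2.
have inj_diag : injective (fun y : R => (y, y)) by move=> y z [].
rewrite -(card_imset [set y : R | y + y == 0] inj_diag).
apply: eq_card => -[x1 x2]; rewrite inE.
apply/forallP/imsetP => [x_van|[y]].
  move: (x_van rp) (x_van rn); rewrite rp_S rn_S /=.
  rewrite (kernel_pattern_unshaded _ (S_unsh _ rp_S)).
  rewrite (kernel_pattern_unshaded _ (S_unsh _ rn_S)).
  rewrite /= sgn_rp sgn_rn subr_eq0 => /eqP <-.
  by rewrite -opprD oppr_eq0 => x11; exists x1; rewrite ?inE.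
rewrite inE => /eqP y2 [-> ->] r; apply/implyP => r_S.
rewrite (kernel_pattern_unshaded _ (S_unsh _ r_S)) /=.
by case: (sgn r); rewrite ?subrr // -opprD y2 oppr0.
Qed.

Lemma card_solvable_avoiding_mixed (S : {set F}) :
  [exists r in S, shaded r] && [exists r in S, ~~ shaded r] ->
  #|solvable_avoiding S| = (#|R| ^ (#|V| + 2 - #|S|))%N.
Proof.
by move/kernel_vanishing_mixed => kerE; rewrite -card_solvable_avoiding kerE cards1 muln1.
Qed.

Lemma card_solvable_avoiding_one_class (S : {set F}) :
  (0 < #|S|)%N && ((S \subset shaded) ||
                   (S \subset [pred r | ~~ shaded r]) && same_sign sgn S) ->
  #|solvable_avoiding S| = (#|R| ^ (#|V| + 1 - #|S|))%N.
Proof.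
case/andP => /card_gt0P[r0 r0_S] S_class.
have [rs [ru [rs_sh ru_unsh]]] := exists_shaded_unshaded.
have [S_le kerE] : (#|S| <= #|V| + 1)%N /\ #|kernel_vanishing S| = #|R|.
  case/orP: S_class => [S_sh | /andP[S_unsh S_sgn]].
    split; last exact: card_kernel_vanishing_shaded r0_S S_sh.
    by apply: (card_notin_regions (r := ru)); apply: contra ru_unsh => /(subsetP S_sh).
  split; last exact: card_kernel_vanishing_same_sign r0_S S_unsh S_sgn.
  apply: (card_notin_regions (r := rs)); apply: contraL rs_sh => /(subsetP S_unsh).
  by rewrite inE.
have R_gt0 : (0 < #|R|)%N by apply/card_gt0P; exists 0.
have := card_solvable_avoiding S; rewrite kerE.
have -> : (#|V| + 2 - #|S| = (#|V| + 1 - #|S|).+1)%N by lia.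
by rewrite expnS mulnC => /eqP; rewrite eqn_pmul2l // => /eqP.
Qed.

Lemma card_solvable_avoiding_opposite (S : {set F}) :
  (S \subset [pred r | ~~ shaded r]) && ~~ same_sign sgn S ->
  (#|solvable_avoiding S| * #|[set y : R | (y + y == 0)%R]| =
     #|R| ^ (#|V| + 2 - #|S|))%N.
Proof.
case/andP => S_unsh S_sgn.
by rewrite -(card_kernel_vanishing_opposite S_unsh S_sgn) card_solvable_avoiding.
Qed.

End Counting.

Section IntegerSolutions.
Variables (r r' : F).
Hypotheses (r_sh : shaded r) (r'_unsh : ~~ shaded r').
Local Open Scope ring_scope.

Lemma card_free_regions : #|V| = #|~: [set r; r']|.
Proof.
have neq_rr' : r != r' by apply: contraNneq r'_unsh => <-.
by have := cardsC [set r; r']; rewrite cards2 neq_rr' card_regions; lia.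
Qed.

Definition free_region (i : 'I_#|V|) : F := enum_val (cast_ord card_free_regions i).

(* The transposed game matrix with the columns of [r] and [r'] deleted: rows are
   indexed by the remaining regions, columns by the vertices. *)
Definition free_game_mx (K : comUnitRingType) : 'M[K]_#|V| :=
  \matrix_(i, j) (if incident (enum_val j) (free_region i) then 1 else 0).

Definition pattern_of_row (K : comUnitRingType) (w : 'rV[K]_#|V|) : {ffun F -> K} :=
  [ffun x => \sum_(i | free_region i == x) w 0 i].

Lemma free_region_inj : injective free_region.
Proof. by move=> i j /enum_val_inj /cast_ord_inj. Qed.

Lemma pattern_of_row_free (K : comUnitRingType) (w : 'rV[K]_#|V|) i :
  pattern_of_row w (free_region i) = w 0 i.
Proof. by rewrite ffunE (big_pred1 i) // => j /=; rewrite (inj_eq free_region_inj). Qed.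

Lemma pattern_of_row_fixed (K : comUnitRingType) (w : 'rV[K]_#|V|) x :
  x \in [set r; r'] -> pattern_of_row w x = 0.
Proof.
move=> x_fixed; rewrite ffunE big_pred0 // => i; apply: contraTF x_fixed => /eqP <-.
by have := enum_valP (cast_ord card_free_regions i); rewrite inE.
Qed.

Lemma game_apply_row (K : comUnitRingType) (a : V -> F -> K) (w : 'rV[K]_#|V|) j :
  (forall v x, incident v x -> a v x = 1) ->
  game_apply vtx reg a (pattern_of_row w) (enum_val j) = (w *m free_game_mx K) 0 j.
Proof.
move=> a1; rewrite mxE /game_apply (eq_bigr (pattern_of_row w)) => [|x x_inc]; last first.
  by rewrite a1 // mul1r.
transitivity (\sum_(i | incident (enum_val j) (free_region i)) w 0 i).
  rewrite (partition_big free_region (incident (enum_val j))) //=.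
  apply: eq_bigr => x x_inc; rewrite ffunE; apply: eq_bigl => i.
  by case: eqP => [->|]; rewrite ?x_inc ?andbF.
rewrite big_mkcond; apply: eq_bigr => i _; rewrite mxE.
by case: (incident _ _); rewrite ?mulr1 ?mulr0.
Qed.

Lemma free_game_mx_row_inj (K : comUnitRingType) (w : 'rV[K]_#|V|) :
  w *m free_game_mx K = 0 -> w = 0.
Proof.
move=> w_null; pose one : V -> F -> K := fun _ _ => 1.
have one_const v : exists av : K, not_zero_divisor av /\ forall x, incident v x -> one v x = av.
  by exists 1; split=> // y; rewrite mul1r.
have [|x p_eq] := null_pattern_kernel one_const (p := pattern_of_row w).
  by move=> v; rewrite -(enum_rankK v) game_apply_row // w_null mxE.
have x0 : x = (0, 0).
  by apply: (kernel_pattern_eq0_mixed r_sh r'_unsh);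
    rewrite -p_eq pattern_of_row_fixed // !inE eqxx ?orbT.
apply/rowP => i; rewrite -pattern_of_row_free p_eq x0 !ffunE !mxE.
by rewrite !mul0r addr0.
Qed.

Lemma free_game_mx_int_unit : free_game_mx int \in unitmx.
Proof.
rewrite unitmxE; apply: int_unit_of_Fp_neq0 => p _; rewrite -det_map_mx.
have -> : map_mx intr (free_game_mx int) = free_game_mx 'F_p.
  by apply/matrixP => i j; rewrite !mxE; case: (incident _ _); rewrite ?rmorph1 ?rmorph0.
by apply/det0P => -[w w_neq0 /free_game_mx_row_inj w0]; rewrite w0 eqxx in w_neq0.
Qed.

Lemma exists_solving_int (a : V -> F -> int) c :
  (forall v x, incident v x -> a v x = 1) ->
  exists p, [/\ solving vtx reg a c p, p r = 0 & p r' = 0].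
Proof.
move=> a1; pose cw : 'rV[int]_#|V| := \row_j (- c (enum_val j)).
exists (pattern_of_row (cw *m invmx (free_game_mx int))).
split; try by rewrite pattern_of_row_fixed // !inE eqxx ?orbT.
move=> v; rewrite -(enum_rankK v) game_apply_row //.
by rewrite mulmxKV ?free_game_mx_int_unit // mxE.
Qed.

End IntegerSolutions.

Lemma count_statement_Zp m (a : V -> F -> 'Z_m) : (1 < m)%N ->
  (forall v, exists av, not_zero_divisor av /\ forall r, incident v r -> a v r = av) ->
  count_statement vtx reg shaded sgn a.
Proof.
move=> m_gt1 a_const S; rewrite -/(solvable_avoiding a S).
have card_Zm : #|'Z_m| = m by rewrite card_ord Zp_cast.
split=> S_case.
- by rewrite card_solvable_avoiding_mixed // card_Zm.
- by rewrite card_solvable_avoiding_one_class // card_Zm.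
have := card_solvable_avoiding_opposite a_const S_case.
rewrite card_Zp_double_eq0 // card_Zm.
by case: (odd m) => <-; rewrite ?muln1 ?mulnK.
Qed.

End Diagram.

Unset Implicit Arguments.
Local Open Scope ring_scope.

Theorem mainTheorem16 (T : finType) (s al : {perm T}) (V F : finType)
    (vtx : T -> V) (reg : T -> F) (k : option nat) (a : V -> F -> Zk k)
    (shaded : pred F) (sgn : F -> bool) :
  knot_map s al ->
  labeling s vtx ->
  labeling (face_perm s al) reg ->
  reduced vtx reg ->
  valid_k k ->
  is_version vtx reg a ->
  checkerboard s reg shaded ->
  alternating_signing vtx reg shaded sgn ->
  [/\ (forall r r' : F, shaded r -> ~~ shaded r' ->
         forall c : {ffun V -> Zk k},
           exists! p : {ffun F -> Zk k}, [/\ solving vtx reg a c p, p r = 0 & p r' = 0]),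
      (forall m : nat, k = Some m -> odd m ->
         forall r r' : F, ~~ shaded r -> ~~ shaded r' -> sgn r != sgn r' ->
         forall c : {ffun V -> Zk k},
           exists! p : {ffun F -> Zk k}, [/\ solving vtx reg a c p, p r = 0 & p r' = 0])
    & @part3 T V F vtx reg k shaded sgn a].
Proof.
move=> knot vtx_lab reg_lab red k_valid version chk signing.
case: k a version k_valid => [m|] a version /= k_valid.
- have a_const v : exists av, not_zero_divisor av /\
      forall r, incident vtx reg v r -> a v r = av.
    by have := version v; rewrite (red v).
  have uniq_sol := exists_unique_solving knot vtx_lab reg_lab red chk signing a_const.
  have exist_sol := exists_solving_avoiding knot vtx_lab reg_lab red chk signing a_const.
  split=> [r r' r_sh r'_unsh c | _ [<-] m_odd r r' r_unsh r'_unsh sgn_rr' c |].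
  + have kernel0 := kernel_pattern_eq0_mixed (sgn := sgn) (R := 'Z_m) r_sh r'_unsh.
    by apply: uniq_sol kernel0 (exist_sol _ _ _ _ kernel0); apply: contraNneq r'_unsh => <-.
  + have kernel0 (x : 'Z_m * 'Z_m) := kernel_pattern_eq0_opposite
      (x := x) (fun y => @Zp_double_eq0_odd m y k_valid m_odd) r_unsh r'_unsh sgn_rr'.
    by apply: uniq_sol kernel0 (exist_sol _ _ _ _ kernel0); apply: contraNneq sgn_rr' => ->.
  + exact (count_statement_Zp knot vtx_lab reg_lab red chk signing k_valid a_const).
have a1 v r : incident vtx reg v r -> a v r = 1.
  by case/version => // /andP[]; rewrite (red v).
have a_const v : exists av : int, not_zero_divisor av /\
    forall r, incident vtx reg v r -> a v r = av.
  by exists 1; split; [move=> y; rewrite mul1r | exact: a1].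
split=> // r r' r_sh r'_unsh c.
apply: (exists_unique_solving knot vtx_lab reg_lab red chk signing a_const).
  by move=> x; apply: kernel_pattern_eq0_mixed r_sh r'_unsh.
exact (exists_solving_int knot vtx_lab reg_lab red chk signing r_sh r'_unsh c a1).
Qed.
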